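(* For every $M>0$ there exists a function $\phi:\mathbb{R}^2\to\mathbb{R}$ generated by a $\sigma$-activated network with width $9$ and depth $2$ such that $\phi(x,y)=xy$ for all $x,y\in[-M,M]$.
   Context: Let $\sigma_1:\mathbb{R}\to\mathbb{R}$ be the continuous triangular-wave function of period $2$: $\sigma_1(x)=|x|$ for $x\in[-1,1]$, $\sigma_1(x+2)=\sigma_1(x)$. The activation is $\sigma(x)=\sigma_1(x)$ for $x\ge0$ and $\sigma(x)=x/(|x|+1)$ for $x<0$, applied entrywise. A function generated by a $\sigma$-activated network with input dimension $n$, width $N$ and depth $L$ is a function of the form $\mathcal{L}_{\ell}\circ\sigma\circ\mathcal{L}_{\ell-1}\circ\cdots\circ\sigma\circ\mathcal{L}_0$ with $\ell\le L$ hidden layers, affine maps $\mathcal{L}_i$, $\mathcal{L}_0$ with domain $\mathbb{R}^n$, $\mathcal{L}_\ell$ with codomain $\mathbb{R}$, and at most $N$ neurons in each hidden layer. *)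

From HB Require Import structures.
From mathcomp Require Import all_boot all_order all_algebra.
From mathcomp Require Import reals.
Set Implicit Arguments. Unset Strict Implicit. Unset Printing Implicit Defensive.
Import Order.TTheory GRing.Theory Num.Theory.
Local Open Scope ring_scope.

(* Triangular wave of period 2: sigma1 x = |x| on [-1,1], sigma1 (x+2) = sigma1 x.
   Explicit formula: |x - 2*floor((x+1)/2)|. *)
Definition sigma1 {R : realType} (x : R) : R :=
  `| x - 2 * (Num.floor ((x + 1) / 2))%:~R |.

Definition sigma {R : realType} (x : R) : R :=
  if 0 <= x then sigma1 x else x / (`|x| + 1).

(* A sigma-activated network with input dimension n:
   - [Out w b] is the final affine map R^n -> R, x |-> w x + b;
   - [Hidden A b rest] is an affine map R^n -> R^m, x |-> A x + b,
     followed by entrywise sigma (a hidden layer with m neurons),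
     followed by the rest of the network on R^m. *)
Inductive net (R : realType) : nat -> Type :=
| Out : forall n, 'rV[R]_n -> R -> net R n
| Hidden : forall n m, 'M[R]_(m, n) -> 'cV[R]_m -> net R m -> net R n.

Fixpoint net_eval {R : realType} {n} (nt : net R n) : 'cV[R]_n -> R :=
  match nt in net _ n return 'cV[R]_n -> R with
  | Out _ w b => fun x => (w *m x) 0 0 + b
  | Hidden _ _ A b rest => fun x => net_eval rest (map_mx sigma (A *m x + b))
  end.

Fixpoint net_depth {R : realType} {n} (nt : net R n) : nat :=
  match nt with
  | Out _ _ _ => 0%N
  | Hidden _ _ _ _ rest => (net_depth rest).+1
  end.

Fixpoint net_width {R : realType} {n} (nt : net R n) : nat :=
  match nt with
  | Out _ _ _ => 0%N
  | Hidden _ m _ _ rest => maxn m (net_width rest)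
  end.

Definition generated_by {R : realType} (n N L : nat) (f : 'cV[R]_n -> R) : Prop :=
  exists nt : net R n,
    (net_depth nt <= L)%N /\ (net_width nt <= N)%N /\ forall x, net_eval nt x = f x.

Definition vec2 {R : realType} (x y : R) : 'cV[R]_2 := \col_i [:: x; y]`_i.
Arguments generated_by {R} n N L f.

(** For [z < 0] the activation is [z / (1 - z)], so [sigma (1 - v) = 1/v - 1]
    for [v > 1]: a hidden neuron fed with negative inputs computes a shifted
    reciprocal.  Two such neurons turn [u] into [c/(c-u) + c/(c+u) = 2c^2/(c^2-u^2)],
    and a second reciprocal neuron gives back [(c^2 - u^2)/(2c^2) - 1], a quadratic
    in [u].  Taking [c = 2M + 2] keeps every pre-activation negative for
    [|x|, |y| <= M], and polarization [xy = ((x+y)^2 - (x-y)^2)/4] finishes. *)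
From HB Require Import structures.
From mathcomp Require Import all_boot all_order all_algebra.
From mathcomp Require Import reals.
From mathcomp Require Import ring lra.
Import Order.TTheory GRing.Theory Num.Theory.
Local Open Scope ring_scope.

Section ReciprocalActivation.
Context {R : realType}.
Implicit Types c u v z : R.

Lemma sigma_lt0 z : z < 0 -> sigma z = z / (1 - z).
Proof. by move=> z_lt0; rewrite /sigma leNgt z_lt0 /= ltr0_norm // addrC. Qed.

Lemma sigma_1B v : 1 < v -> sigma (1 - v) = v^-1 - 1.
Proof.
move=> v_gt1; rewrite sigma_lt0; last by lra.
have v_neq0 : v != 0 by apply/lt0r_neq0; lra.
rewrite (_ : 1 - (1 - v) = v); [by field | ring].
Qed.

Definition square_block c u : R :=
  sigma (1 - 2 * c - c * sigma (1 - (c - u)) - c * sigma (1 - (c + u))).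

Lemma square_blockE c u : `|u| + 1 < c ->
  square_block c u = (c ^+ 2 - u ^+ 2) / (2 * c ^+ 2) - 1.
Proof.
move=> lt_uc; have /andP[u_gt u_lt] : - (c - 1) < u < c - 1 by rewrite -ltr_norml; lra.
have [cBu_gt0 cDu_gt0] : 0 < c - u /\ 0 < c + u by split; lra.
have c_gt0 : 0 < c by lra.
have den_gt0 : 0 < c ^+ 2 - u ^+ 2.
  by rewrite (_ : _ - _ = (c - u) * (c + u)); [exact: mulr_gt0 | ring].
have den_le : c ^+ 2 - u ^+ 2 <= c ^+ 2 by have := sqr_ge0 u; lra.
rewrite /square_block !sigma_1B; try lra.
have -> : 1 - 2 * c - c * ((c - u)^-1 - 1) - c * ((c + u)^-1 - 1)
          = 1 - 2 * c ^+ 2 / (c ^+ 2 - u ^+ 2).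
  by field; rewrite !lt0r_neq0.
rewrite sigma_1B; last first.
  rewrite ltr_pdivlMr // mul1r; have := exprn_gt0 2 c_gt0; lra.
by rewrite invf_div.
Qed.

End ReciprocalActivation.

Section MultiplicationNetwork.
Context {R : realType}.

(* First layer: the neurons [u + 1 - c] and [-u + 1 - c] for [u = x + y] and
   [u = x - y]; row [k] of the second layer reads neurons [2k] and [2k + 1]. *)
Definition mul_layer1 : 'M[R]_(4, 2) :=
  \matrix_(i < 4, j < 2) (if j == 0 then [:: 1; -1; 1; -1]`_i else [:: 1; -1; -1; 1]`_i).

Definition mul_layer2 (c : R) : 'M[R]_(2, 4) :=
  \matrix_(k < 2, i < 4) (if i./2 == k then - c else 0).

Definition mul_out (c : R) : 'rV[R]_2 := \row_(k < 2) [:: - c ^+ 2 / 2; c ^+ 2 / 2]`_k.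

Definition mul_net (c : R) : net R 2 :=
  Hidden mul_layer1 (const_mx (1 - c))
    (Hidden (mul_layer2 c) (const_mx (1 - 2 * c)) (Out (mul_out c) 0)).

Lemma mul_netE (c x y : R) :
  net_eval (mul_net c) (vec2 x y) =
  c ^+ 2 / 2 * (square_block c (x - y) - square_block c (x + y)).
Proof.
rewrite /= /vec2 /square_block !(big_ord_recr, big_ord0, mxE) /=.
rewrite !(mul1r, mulN1r, mul0r, add0r, addr0).
have -> : x + y + (1 - c) = 1 - (c - (x + y)) by ring.
have -> : - x - y + (1 - c) = 1 - (c + (x + y)) by ring.
have -> : x - y + (1 - c) = 1 - (c - (x - y)) by ring.
have -> : - x + y + (1 - c) = 1 - (c + (x - y)) by ring.
have layer2E u : - c * sigma (1 - (c - u)) + - c * sigma (1 - (c + u)) + (1 - 2 * c)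
                 = 1 - 2 * c - c * sigma (1 - (c - u)) - c * sigma (1 - (c + u)) by ring.
rewrite !layer2E; ring.
Qed.

End MultiplicationNetwork.

Theorem lemma16 (R : realType) (M : R) (hM : 0 < M) :
  exists phi : 'cV[R]_2 -> R,
    generated_by 2%N 9%N 2%N phi /\
    forall x y : R, -M <= x <= M -> -M <= y <= M -> phi (vec2 x y) = x * y.
Proof.
pose c := 2 * M + 2.
exists (net_eval (mul_net c)); split.
  by exists (mul_net c).
move=> x y /andP[x_ge x_le] /andP[y_ge y_le].
have norm_lt u : - 2 * M <= u <= 2 * M -> `|u| + 1 < c.
  move=> /andP[u_ge u_le]; have : `|u| <= 2 * M by rewrite ler_norml; lra.
  by rewrite /c; lra.
rewrite mul_netE !square_blockE; try by apply: norm_lt; apply/andP; split; lra.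
have c_neq0 : c != 0 by apply/lt0r_neq0; rewrite /c; lra.
by field.
Qed.
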